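(* Let $1<\alpha<2$ and $\beta\geq 1$ with $\alpha-\beta+1>0$, and let $\tau>0$. Assume that $A$ is a closed linear operator on a Banach space $X$ which is $\omega$-sectorial of angle $\frac{(\alpha-1)\pi}{2}$ for some $\omega<0$. Then $A$ generates a discrete $(\alpha,\beta)$-resolvent family $\{S_{\alpha,\beta}^n\}_{n\in\mathbb{N}_0}\subset\mathcal{B}(X)$.
   Context: Fix a step size $\tau>0$. For $\gamma>0$ and $n\in\mathbb{N}_0$ let $k_\tau^\gamma(n):=\frac{\tau^{\gamma-1}\Gamma(\gamma+n)}{\Gamma(\gamma)\Gamma(n+1)}$. For $\alpha,\beta>0$, a sequence $\{S_{\alpha,\beta}^n\}_{n\in\mathbb{N}_0}\subset\mathcal{B}(X)$ is called a discrete $(\alpha,\beta)$-resolvent family generated by the closed operator $A:D(A)\subset X\to X$ if (1) $S^n_{\alpha,\beta}x\in D(A)$ for all $x\in X$, $n\in\mathbb N_0$, and $AS_{\alpha,\beta}^nx=S_{\alpha,\beta}^nAx$ for all $x\in D(A)$, $n\in\mathbb{N}_0$; (2) for every $x\in X$ and $n\in\mathbb{N}_0$, $S_{\alpha,\beta}^nx=k^\beta_\tau(n)x+\tau A\sum_{j=0}^n k^\alpha_\tau(n-j)S_{\alpha,\beta}^jx$. An operator $A$ is $\omega$-sectorial of angle $\theta$ (with $\theta\in[0,\pi/2)$, $\omega\in\mathbb R$) if its resolvent exists on $\omega+\Sigma_\theta:=\{\omega+\lambda:\lambda\in\mathbb C\setminus\{0\},\ |\arg\lambda|<\frac{\pi}{2}+\theta\}$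 and there is $M>0$ with $\|(\lambda-A)^{-1}\|\le \frac{M}{|\lambda-\omega|}$ for all $\lambda\in\omega+\Sigma_\theta$. *)

From HB Require Import structures.
From mathcomp Require Import all_boot all_order all_algebra.
From mathcomp Require Import all_classical all_reals all_analysis.
From mathcomp Require Import complex.

Set Implicit Arguments.
Unset Strict Implicit.
Unset Printing Implicit Defensive.

Import Order.TTheory GRing.Theory Num.Theory.
Import numFieldNormedType.Exports.
Local Open Scope classical_set_scope.
Local Open Scope ring_scope.
Local Open Scope complex_scope.

Definition Gamma {R : realType} (x : R) : R :=
  Rintegral (@lebesgue_measure R) `]0%R, +oo[
    (fun t : R => t `^ (x - 1) * expR (- t)).

Definition kfun {R : realType} (tau g : R) (n : nat) : R :=
  tau `^ (g - 1) * Gamma (g + n%:R) / (Gamma g * Gamma (n%:R + 1)).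

Definition bounded_op {R : realType} {X : normedModType R[i]} (T : X -> X) : Prop :=
  (forall (a : R[i]) (x y : X), T (a *: x + y) = a *: T x + T y) /\ continuous T.

(* A : D(A) ⊂ X -> X is a closed linear operator (values of A outside D are irrelevant) *)
Definition closed_operator {R : realType} {X : normedModType R[i]}
    (D : set X) (A : X -> X) : Prop :=
  [/\ D 0,
      (forall (a : R[i]) (x y : X), D x -> D y -> D (a *: x + y)),
      (forall (a : R[i]) (x y : X), D x -> D y -> A (a *: x + y) = a *: A x + A y)
    & closed [set p : X * X | D p.1 /\ p.2 = A p.1]].

Definition is_resolvent {R : realType} {X : normedModType R[i]}
    (D : set X) (A : X -> X) (l : R[i]) (Rl : X -> X) : Prop :=
  [/\ bounded_op Rl,
      (forall x, D (Rl x) /\ l *: Rl x - A (Rl x) = x)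
    & (forall x, D x -> Rl (l *: x - A x) = x)].

Definition sector {R : realType} (omega theta : R) (l : R[i]) : Prop :=
  exists mu : R[i], l = omega%:C + mu /\ mu != 0 /\
    exists r t : R, 0 < r /\ `|t| < pi / 2 + theta /\
      mu = (r * cos t) +i* (r * sin t).

Definition sectorial {R : realType} {X : normedModType R[i]}
    (D : set X) (A : X -> X) (omega theta : R) : Prop :=
  (forall l, sector omega theta l -> exists Rl, is_resolvent D A l Rl) /\
  exists M : R, 0 < M /\
    forall l, sector omega theta l -> forall Rl, is_resolvent D A l Rl ->
      forall x : X, `|Rl x| <= (M%:C / `|l - omega%:C|) * `|x|.

Definition discrete_resolvent_family {R : realType} {X : normedModType R[i]}
    (tau alpha beta : R) (D : set X) (A : X -> X) (S : nat -> X -> X) : Prop :=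
  [/\ (forall n, bounded_op (S n)),
      (forall n x, D (S n x)),
      (forall n x, D x -> A (S n x) = S n (A x))
    & (forall n x, S n x = (kfun tau beta n)%:C *: x
          + tau%:C *: A (\sum_(j < n.+1) (kfun tau alpha (n - j))%:C *: S j x))].

(* The defining relation
     S^n x = k^beta(n) x + tau A (sum_{j<=n} k^alpha(n-j) S^j x)
   is an implicit scheme: isolating the term j = n gives
     (lambda - A) S^n x = lambda (k^beta(n) x + tau sum_{j<n} k^alpha(n-j) A S^j x)
   with lambda = (tau k^alpha(0))^{-1}.  So the family exists as soon as the
   resolvent (lambda - A)^{-1} exists at this single point, and S^n is then
   defined by strong recursion on n. *)
From HB Require Import structures.
From mathcomp Require Import all_boot all_order all_algebra.
From mathcomp Require Import all_classical all_reals all_analysis.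
From mathcomp Require Import complex.
From mathcomp Require Import ring.
From mathcomp Require Import measurable_realfun exponential_distribution.
Import Order.TTheory GRing.Theory Num.Theory.
Import numFieldNormedType.Exports.
Local Open Scope classical_set_scope.
Local Open Scope ring_scope.

(** * Positivity of the kernel k^gamma at 0 *)

Section GammaPositive.
Variable R : realType.
Local Notation mu := (@lebesgue_measure R).

Definition Gamma_integrand (s t : R) : R := t `^ s * expR (- t).

Lemma measurable_Gamma_integrand s : measurable_fun setT (Gamma_integrand s).
Proof.
apply: measurable_funM; first exact: measurable_powR.
by apply: measurableT_comp; [exact: measurable_expR | exact: measurable_funN].
Qed.

Lemma powR_le1D {s t : R} : 0 <= s <= 1 -> 0 < t -> t `^ s <= 1 + t.
Proof.
case/andP=> s0 s1 t0; have [t1|t1] := leP t 1.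
  apply: (le_trans (y := 1)); last by rewrite lerDl ltW.
  by rewrite -(powRr0 t); apply: ger_powR => //; rewrite t0 t1.
apply: (le_trans (y := t)); last by rewrite lerDr.
by apply: ler1_powR => //; rewrite ltW.
Qed.

(* On [1,2] the integrand is at least e^{-2}, so the integral is positive. *)
Lemma Gamma_integral_gt0 (s : R) : 0 <= s ->
  (0 < \int[mu]_(t in `]0%R, +oo[) (Gamma_integrand s t)%:E)%E.
Proof.
move=> s0; have mf := measurable_Gamma_integrand s.
apply: (@lt_le_trans _ _ (\int[mu]_(t in `[1%R, 2%R]) (expR (-2) : R)%:E)%E).
  rewrite integral_cst //= lebesgue_measure_itv /= lte_fin ltr1n /=.
  by rewrite -EFinD -EFinM lte_fin mulr_gt0 ?expR_gt0 // subr_gt0 ltr1n.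
apply: (@le_trans _ _ (\int[mu]_(t in `[1%R, 2%R]) (Gamma_integrand s t)%:E)%E).
  apply: ge0_le_integral.
  - by [].
  - by move=> t _; rewrite lee_fin expR_ge0.
  - by [].
  - by apply/measurable_EFinP; exact: measurable_funTS.
  move=> t; rewrite /= in_itv /= => /andP[t1 t2]; rewrite lee_fin.
  rewrite -[X in X <= _]mul1r ler_pM ?expR_ge0 ?ler_expR ?lerN2 //.
  by rewrite -(powRr0 t); apply: ler_powR.
apply: ge0_subset_integral => //.
- by apply/measurable_EFinP; exact: measurable_funTS.
- by move=> t _; rewrite lee_fin mulr_ge0 ?powR_ge0 ?expR_ge0.
- move=> t; rewrite /= !in_itv /= => /andP[t1 _]; rewrite andbT.
  exact: lt_le_trans t1.
Qed.

(* For s in [0,1], t^s e^{-t} <= 2 e^{t/2} e^{-t} = 4 * (exponential density of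
   rate 1/2), whose integral is 4. *)
Lemma Gamma_integral_lt_oo (s : R) : 0 <= s <= 1 ->
  (\int[mu]_(t in `]0%R, +oo[) (Gamma_integrand s t)%:E < +oo)%E.
Proof.
move=> s01; have mf := measurable_Gamma_integrand s.
pose dom t := 4 * exponential_pdf (2^-1 : R) t.
have mdom : measurable_fun setT dom.
  by apply: measurable_funM => //; exact: measurable_exponential_pdf.
have dom_ge0 t : 0 <= dom t by rewrite mulr_ge0 // exponential_pdf_ge0.
apply: (@le_lt_trans _ _ (\int[mu]_(t in `]0%R, +oo[) (dom t)%:E)%E).
  apply: ge0_le_integral => //.
  - by move=> t _; rewrite lee_fin mulr_ge0 ?powR_ge0 ?expR_ge0.
  - by apply/measurable_EFinP; exact: measurable_funTS.
  - by apply/measurable_EFinP; exact: measurable_funTS.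
  move=> t; rewrite /= in_itv /= andbT => t0; rewrite lee_fin /dom.
  rewrite exponential_pdfE; last exact: ltW.
  have -> : 4 * (2^-1 * expR (- 2^-1 * t)) = (2 * expR (t / 2)) * expR (- t) :> R.
    rewrite -mulrA -expRD mulrA; congr (_ * _); first by field.
    by congr expR; field.
  rewrite /Gamma_integrand (ler_pM2r (expR_gt0 (- t))).
  apply: (le_trans (powR_le1D s01 t0)).
  apply: (le_trans (y := 2 * (1 + t / 2))).
    by rewrite mulrDr mulr1 mulrCA divff ?mulr1 // ?lerD2r ?ler1n ?pnatr_eq0.
  by rewrite ler_pM2l ?ltr0n // expR_ge1Dx.
apply: (@le_lt_trans _ _ (\int[mu]_t (dom t)%:E)%E).
  apply: ge0_subset_integral => //; first exact/measurable_EFinP.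
  by move=> t _; rewrite lee_fin.
under eq_integral do rewrite EFinM.
rewrite ge0_integralZl_EFin //.
- by rewrite integral_exponential_pdf ?invr_gt0 ?ltr0n // mule1 ltry.
- by move=> t _; rewrite lee_fin exponential_pdf_ge0 // invr_ge0 ler0n.
- by apply/measurable_EFinP; exact: measurable_exponential_pdf.
Qed.

Lemma Gamma_gt0 (x : R) : 1 <= x <= 2 -> 0 < Gamma x.
Proof.
case/andP => x1 x2; have s0 : 0 <= x - 1 by rewrite subr_ge0.
have s1 : x - 1 <= 1 by rewrite lerBlDr.
rewrite /Gamma /Rintegral; apply: fine_gt0; apply/andP; split.
- exact: Gamma_integral_gt0.
- by apply: Gamma_integral_lt_oo; rewrite s0 s1.
Qed.

Lemma kfun0_gt0 (tau g : R) : 0 < tau -> 1 <= g <= 2 -> 0 < kfun tau g 0.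
Proof.
move=> tau0 g12; rewrite /kfun mulr0n addr0 add0r.
by rewrite divr_gt0 ?mulr_gt0 ?powR_gt0 ?Gamma_gt0 // lexx ler1n.
Qed.

End GammaPositive.

Local Open Scope complex_scope.

(* A real number to the right of omega lies in omega + Sigma_theta whenever the
   opening pi/2 + theta is positive (take argument 0). *)
Lemma sector_real (R : realType) (omega theta l : R) :
  omega < l -> - (pi / 2) < theta -> sector omega theta l%:C.
Proof.
move=> om_l theta_gt; have d0 : 0 < l - omega by rewrite subr_gt0.
exists ((l - omega) +i* 0); split.
  by apply/eqP; rewrite eq_complex /= addr0 subrKC !eqxx.
split; first by apply/negP; rewrite eq_complex /= eqxx andbT gt_eqF.
exists (l - omega), 0; split => //; split; last by rewrite cos0 sin0 mulr1 mulr0.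
by rewrite normr0 -ltrBlDl sub0r.
Qed.

Lemma continuous_scale (K : numFieldType) (V W : normedModType K)
    (k : K) (f : V -> W) : continuous f -> continuous (fun x => k *: f x).
Proof. by move=> cf x; apply: continuousZ; [exact: cst_continuous | exact: cf]. Qed.

Lemma continuous_add (K : numFieldType) (V W : normedModType K) (f g : V -> W) :
  continuous f -> continuous g -> continuous (fun x => f x + g x).
Proof. by move=> cf cg x; apply: continuousD; [exact: cf | exact: cg]. Qed.

Lemma continuous_sub (K : numFieldType) (V W : normedModType K) (f g : V -> W) :
  continuous f -> continuous g -> continuous (fun x => f x - g x).
Proof. by move=> cf cg x; apply: continuousB; [exact: cf | exact: cg]. Qed.

Lemma continuous_sum (K : numFieldType) (V W : normedModType K)
    (I : Type) (r : seq I) (F : I -> V -> W) :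
  (forall i, continuous (F i)) -> continuous (fun x => \sum_(i <- r) F i x).
Proof.
move=> cF; rewrite -fct_sumE.
apply: (big_ind (fun f : V -> W => continuous f)) => //.
- by move=> x; exact: cst_continuous.
- by move=> f g; exact: continuous_add.
Qed.

Definition linear_on {R : realType} {X : normedModType R[i]}
    (D : set X) (T : X -> X) : Prop :=
  [/\ D 0,
      (forall (a : R[i]) (x y : X), D x -> D y -> D (a *: x + y))
    & (forall (a : R[i]) (x y : X), D x -> D y -> T (a *: x + y) = a *: T x + T y)].

Section LinearOnDomain.
Context {R : realType} {X : normedModType R[i]} {D : set X} {T : X -> X}.
Hypothesis T_lin : linear_on D T.

Let D0 : D 0. Proof. by case: T_lin. Qed.
Let D_comb (a : R[i]) {x y : X} : D x -> D y -> D (a *: x + y).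
Proof. by case: T_lin => _ D_comb _; exact: D_comb. Qed.
Lemma op_comb (a : R[i]) {x y : X} : D x -> D y -> T (a *: x + y) = a *: T x + T y.
Proof. by case: T_lin => _ _ T_comb; exact: T_comb. Qed.

Lemma op0 : T 0 = 0.
Proof.
have := op_comb 1 D0 D0; rewrite !scale1r addr0 => h.
by apply: (addrI (T 0)); rewrite addr0 -h.
Qed.

Lemma domZ (a : R[i]) {x : X} : D x -> D (a *: x).
Proof. by move=> Dx; have := D_comb a Dx D0; rewrite addr0. Qed.

Lemma opZ (a : R[i]) {x : X} : D x -> T (a *: x) = a *: T x.
Proof. by move=> Dx; have := op_comb a Dx D0; rewrite addr0 op0 addr0. Qed.

Lemma domD {x y : X} : D x -> D y -> D (x + y).
Proof. by move=> Dx Dy; have := D_comb 1 Dx Dy; rewrite scale1r. Qed.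

Lemma opD {x y : X} : D x -> D y -> T (x + y) = T x + T y.
Proof. by move=> Dx Dy; have := op_comb 1 Dx Dy; rewrite !scale1r. Qed.

Lemma opN {x : X} : D x -> T (- x) = - T x.
Proof. by move=> Dx; rewrite -scaleN1r opZ // scaleN1r. Qed.

Lemma dom_op_sum {I : Type} (r : seq I) {F : I -> X} : (forall i, D (F i)) ->
  D (\sum_(i <- r) F i) /\ T (\sum_(i <- r) F i) = \sum_(i <- r) T (F i).
Proof.
move=> DF; elim: r => [|i r [Dr Tr]]; first by rewrite !big_nil op0.
by rewrite !big_cons; split; [exact: domD | rewrite opD // Tr].
Qed.

End LinearOnDomain.

(** * The implicit scheme for discrete Volterra equations *)

(* Given a linear operator A on D, a resolvent Rl = (lam - A)^{-1}, weights
   kb, ka and a step t with lam t ka(0) = 1, the recursion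
     S n x = lam Rl (kb n x + t sum_{j<n} ka(n-j) A (S j x))
   solves S n x = kb n x + t A (sum_{j<=n} ka(n-j) S j x). *)
Section ImplicitScheme.
Context {R : realType} {X : normedModType R[i]} {D : set X} {A : X -> X}.
Context {lam t : R[i]} {ka : nat -> R[i]} {Rl : X -> X}.
Variable kb : nat -> R[i].
Hypothesis A_lin : linear_on D A.
Hypothesis Rl_resolvent : is_resolvent D A lam Rl.
Hypothesis lam_weight : lam * (t * ka 0) = 1.

Let Rl_lin : linear_on setT Rl.
Proof. by case: Rl_resolvent => -[Rl_comb _] _ _; split=> // a x y _ _; exact: Rl_comb. Qed.
Let Rl_cont : continuous Rl.
Proof. by case: Rl_resolvent => -[]. Qed.
Let Rl_dom x : D (Rl x).
Proof. by case: Rl_resolvent => _ /(_ x) []. Qed.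
Let Rl_right x : lam *: Rl x - A (Rl x) = x.
Proof. by case: Rl_resolvent => _ /(_ x) []. Qed.
Let Rl_left x : D x -> Rl (lam *: x - A x) = x.
Proof. by case: Rl_resolvent => _ _; apply. Qed.

Lemma resolvent_comm {x : X} : D x -> Rl (A x) = A (Rl x).
Proof.
move=> Dx; have := Rl_left x Dx.
rewrite (opD Rl_lin) // (opN Rl_lin) // (opZ Rl_lin) // => h.
by apply: oppr_inj; apply: (addrI (lam *: Rl x)); rewrite h Rl_right.
Qed.

Definition scheme_step (F : nat -> X -> X) (n : nat) (x : X) : X :=
  lam *: Rl (kb n *: x + t *: \sum_(j < n) ka (n - j) *: A (F j x)).

(* scheme_prefix m j is the j-th iterate for j < m (and 0 beyond). *)
Fixpoint scheme_prefix (m : nat) : nat -> X -> X :=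
  if m is m'.+1 then
    fun j => if (j < m')%N then scheme_prefix m' j else scheme_step (scheme_prefix m') m'
  else fun _ _ => 0.

Lemma scheme_prefix_stable {m j : nat} : (j < m)%N -> scheme_prefix m j = scheme_prefix j.+1 j.
Proof.
elim: m j => [//|m IH] j; rewrite ltnS leq_eqVlt => /orP[/eqP ->|jm] /=.
  by rewrite ltnn.
by rewrite jm IH.
Qed.

Definition scheme (n : nat) : X -> X := scheme_prefix n.+1 n.

Definition explicit_part (n : nat) (x : X) : X :=
  kb n *: x + t *: \sum_(j < n) ka (n - j) *: A (scheme j x).

Lemma scheme_implicit n x : scheme n x = lam *: Rl (explicit_part n x).
Proof.
rewrite /scheme /= ltnn /scheme_step /explicit_part.
congr (_ *: Rl (_ + _ *: _)); apply: eq_bigr => j _.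
by rewrite (scheme_prefix_stable (ltn_ord j)).
Qed.

Lemma scheme_dom n x : D (scheme n x).
Proof. by rewrite scheme_implicit; exact: (domZ A_lin). Qed.

Lemma A_scheme n x : A (scheme n x) = lam *: scheme n x - lam *: explicit_part n x.
Proof.
rewrite scheme_implicit (opZ A_lin) // -scalerBr.
by congr (_ *: _); apply/eqP; rewrite eq_sym subr_eq addrC -subr_eq Rl_right.
Qed.

Lemma scheme_volterra n x :
  scheme n x = kb n *: x + t *: A (\sum_(j < n.+1) ka (n - j) *: scheme j x).
Proof.
have [_ ->] := dom_op_sum A_lin (index_enum 'I_n.+1)
  (fun j => domZ A_lin (ka (n - j)) (scheme_dom j x)).
rewrite big_ord_recr /= subnn (opZ A_lin _ (scheme_dom n x)) A_scheme.
under eq_bigr => i _ do rewrite (opZ A_lin _ (scheme_dom i x)).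
rewrite scalerDr addrA -[kb n *: x + _]/(explicit_part n x) -scalerBr !scalerA.
by rewrite mulrC lam_weight scale1r addrCA subrr addr0.
Qed.

Lemma scheme_comb n a x z : scheme n (a *: x + z) = a *: scheme n x + scheme n z.
Proof.
elim/ltn_ind: n a x z => n IH a x z.
have lin_part : explicit_part n (a *: x + z) = a *: explicit_part n x + explicit_part n z.
  rewrite /explicit_part.
  under eq_bigr => j _ do rewrite (IH j (ltn_ord j)) (op_comb A_lin _ (scheme_dom _ _) (scheme_dom _ _))
    scalerDr scalerA mulrC -scalerA.
  rewrite big_split /= -scaler_sumr !scalerDr !scalerA [kb n * a]mulrC [t * a]mulrC.
  by rewrite -!scalerA addrACA.
by rewrite !scheme_implicit lin_part (opD Rl_lin) // (opZ Rl_lin) // scalerDr !scalerA mulrC.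
Qed.

(* Continuity of S n and of A o S n, by strong induction (the latter through
   the formula of A_scheme). *)
Lemma scheme_continuous n :
  continuous (scheme n) /\ continuous (fun x => A (scheme n x)).
Proof.
elim/ltn_ind: n => n IH.
have c_explicit : continuous (explicit_part n).
  apply: continuous_add; first by apply: continuous_scale => x; exact: cvg_id.
  apply: continuous_scale; apply: continuous_sum => i.
  by apply: continuous_scale; exact: (IH i (ltn_ord i)).2.
have c_scheme : continuous (scheme n).
  rewrite (funext (scheme_implicit n)); apply: continuous_scale => x.
  by apply: continuous_comp; [exact: c_explicit | exact: Rl_cont].
split => //; rewrite (funext (A_scheme n)).
by apply: continuous_sub; apply: continuous_scale.
Qed.

Lemma scheme_commute n x : D x -> A (scheme n x) = scheme n (A x).
Proof.
elim/ltn_ind: n x => n IH x Dx.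
have D_AS (j : 'I_n) : D (A (scheme j x)).
  by rewrite (IH j (ltn_ord j) x Dx); exact: scheme_dom.
have [D_sum A_sum] := dom_op_sum A_lin (index_enum 'I_n)
  (fun j => domZ A_lin (ka (n - j)) (D_AS j)).
have A_explicit : explicit_part n (A x) = A (explicit_part n x).
  rewrite /explicit_part (opD A_lin (domZ A_lin _ Dx) (domZ A_lin _ D_sum)).
  rewrite (opZ A_lin _ Dx) (opZ A_lin _ D_sum) A_sum; congr (_ + _ *: _).
  by apply: eq_bigr => j _; rewrite (opZ A_lin _ (D_AS j)) (IH j (ltn_ord j) x Dx).
have D_explicit : D (explicit_part n x) by apply: (domD A_lin); apply: (domZ A_lin).
by rewrite !scheme_implicit A_explicit (opZ A_lin _ (Rl_dom _)) (resolvent_comm D_explicit).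
Qed.

Lemma implicit_scheme_family : exists S : nat -> X -> X,
  [/\ (forall n, bounded_op (S n)),
      (forall n x, D (S n x)),
      (forall n x, D x -> A (S n x) = S n (A x))
    & (forall n x, S n x = kb n *: x + t *: A (\sum_(j < n.+1) ka (n - j) *: S j x))].
Proof.
exists scheme; split.
- by move=> n; split; [exact: scheme_comb | exact: (scheme_continuous n).1].
- exact: scheme_dom.
- exact: scheme_commute.
- exact: scheme_volterra.
Qed.

End ImplicitScheme.

Theorem theorem3p5 (R : realType) (X : completeNormedModType R[i])
    (alpha beta tau omega : R) (D : set X) (A : X -> X) :
  1 < alpha -> alpha < 2 -> 1 <= beta -> 0 < alpha - beta + 1 -> 0 < tau ->
  closed_operator D A ->
  omega < 0 ->
  sectorial D A omega ((alpha - 1) * pi / 2) ->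
  exists S : nat -> X -> X, discrete_resolvent_family tau alpha beta D A S.
Proof.
move=> a1 a2 _ _ tau0 [D0 D_comb A_comb _] omega0 [resolvents _].
have A_lin : linear_on D A by split.
set c := kfun tau alpha 0.
have c0 : 0 < c by apply: kfun0_gt0; rewrite ?(ltW a1) ?(ltW a2).
set lam := (tau * c)^-1.
have lam0 : 0 < lam by rewrite invr_gt0 mulr_gt0.
have lam_sector : sector omega ((alpha - 1) * pi / 2) lam%:C.
  apply: sector_real; first exact: lt_trans lam0.
  rewrite (@lt_le_trans _ _ 0) ?oppr_lt0 ?divr_gt0 ?pi_gt0 //.
  by rewrite divr_ge0 ?mulr_ge0 ?subr_ge0 ?(ltW a1) ?pi_ge0.
have [Rl Rl_resolvent] := resolvents _ lam_sector.
have lam_weight : lam%:C * (tau%:C * c%:C) = 1.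
  by rewrite -!rmorphM /= mulVf ?rmorph1 // gt_eqF // mulr_gt0.
have [S [S_bounded S_dom S_comm S_eq]] :=
  implicit_scheme_family (ka := fun n => (kfun tau alpha n)%:C)
    (fun n => (kfun tau beta n)%:C) A_lin Rl_resolvent lam_weight.
by exists S; split.
Qed.
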